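(* Consider a downlink system with $L$ transmitters, each having $M$ antennas, $K$ single-antenna data receivers and $J$ single-antenna energy receivers. For $k\in\{1,\dots,K\}$ let $\mathbf{h}_k\in\mathbb{C}^{ML\times1}$ and $\mathbf{H}_k=\mathbf{h}_k\mathbf{h}_k^H$; for $j\in\{1,\dots,J\}$ let $\mathbf{g}_j\in\mathbb{C}^{ML\times1}$ and $\mathbf{G}_j=\mathbf{g}_j\mathbf{g}_j^H$. For $l\in\{1,\dots,L\}$ let $\mathbf{A}_l$ be the $ML\times ML$ diagonal matrix with $(l-1)M$ leading zeros, then $M$ ones, then $(L-l)M$ zeros on its diagonal. Fix $\sigma^2>0$, $\eta\in(0,1)$, $Q_{\min}\ge0$, $C_l>0$, $E_l>0$, $\beta_{kl}>0$, $\hat R_k\ge 0$. Let $\mathcal{F}_0$ be the set of tuples of Hermitian matrices $(\{\mathbf{W}_k\}_{k=1}^K,\{\mathbf{V}_j\}_{j=1}^J)$ satisfying (a) $\sum_{i=1}^K\mathrm{tr}(\mathbf{G}_j\mathbf{W}_i)+\sum_{i=1}^J\mathrm{tr}(\mathbf{G}_j\mathbf{V}_i)\ge Q_{\min}/\eta$ for all $j$; (b) $\sum_{k=1}^K\beta_{kl}\,\mathrm{tr}(\mathbf{W}_k\mathbf{A}_l)\,\hat R_k\le C_l$ for all $l$; (c) $\mathbf{W}_k\succeq0$, $\mathbf{V}_j\succeq0$ for all $k,j$. Let (P4) be the problem of maximizing $$\min_{k}\frac{\mathrm{tr}(\mathbf{H}_k\mathbf{W}_k)}{\sum_{i\neq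 k}\mathrm{tr}(\mathbf{H}_k\mathbf{W}_i)+\sum_{i=1}^J\mathrm{tr}(\mathbf{H}_k\mathbf{V}_i)+\sigma^2}$$ over $\mathcal{F}_0$ subject additionally to $\sum_{k=1}^K\mathrm{tr}(\mathbf{W}_k\mathbf{A}_l)+\sum_{j=1}^J\mathrm{tr}(\mathbf{V}_j\mathbf{A}_l)\le E_l$ for all $l$, and let $\gamma_{\max}$ denote its optimal value. For $\gamma>0$, let (P5) be the problem of minimizing $$\max_{l}\frac{\sum_{k=1}^K\mathrm{tr}(\mathbf{W}_k\mathbf{A}_l)+\sum_{j=1}^J\mathrm{tr}(\mathbf{V}_j\mathbf{A}_l)}{E_l}$$ over $\mathcal{F}_0$ subject additionally to $\frac1\gamma\mathrm{tr}(\mathbf{H}_k\mathbf{W}_k)-\sum_{i\ne k}\mathrm{tr}(\mathbf{H}_k\mathbf{W}_i)-\sum_{i=1}^J\mathrm{tr}(\mathbf{H}_k\mathbf{V}_i)-\sigma^2\ge0$ for all $k$, and let $h(\gamma)$ denote its optimal value. Call $\gamma$ achievable if $\gamma\le\gamma_{\max}$. Then a common SINR target $\gamma>0$ is achievable if and only if $h(\gamma)\le 1$.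
   Context: $\mathrm{tr}$ denotes trace and $\succeq0$ positive semidefiniteness. The ratio in (P4) is the signal-to-interference-plus-noise ratio (SINR) of data receiver $k$ under the relaxed beamforming covariances $\mathbf{W}_k$ (data) and $\mathbf{V}_j$ (energy); $h(\gamma)$ is the minimum weighted peak transmit power needed to give every data receiver SINR at least $\gamma$. *)

From mathcomp Require Import all_boot all_order all_algebra.
From mathcomp Require Import complex.
From mathcomp Require Import boolp classical_sets reals constructive_ereal ereal.
Set Implicit Arguments. Unset Strict Implicit. Unset Printing Implicit Defensive.
Import Order.TTheory GRing.Theory Num.Theory.
Local Open Scope ring_scope.
Local Open Scope classical_set_scope.

Section Defs.
Variable R : realType.
Local Notation C := (R[i]).

Definition adjmx m n (A : 'M[C]_(m, n)) : 'M[C]_(n, m) := (map_mx conjc A)^T.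

Definition hermitian n (W : 'M[C]_n) : Prop := adjmx W = W.

Definition psd n (W : 'M[C]_n) : Prop :=
  hermitian W /\ forall x : 'cV[C]_n, 0 <= (adjmx x *m W *m x) 0 0.

(* real part of tr(A B) (the traces occurring below are real) *)
Definition rtr n (A B : 'M[C]_n) : R := complex.Re (\tr (A *m B)).

Variables (L M K J : nat).
Local Notation N := (M * L)%N.

(* A_l (0-indexed l): ones on the diagonal positions l*M .. (l+1)*M - 1 *)
Definition Amat (l : 'I_L) : 'M[C]_N :=
  \matrix_(i, j) (if (i == j) && (l * M <= i < l.+1 * M)%N then 1 else 0).

Definition outer (h : 'cV[C]_N) : 'M[C]_N := h *m adjmx h.

Variables (h : 'I_K -> 'cV[C]_N) (g : 'I_J -> 'cV[C]_N)
  (sigma2 eta Qmin : R) (Cl El : 'I_L -> R) (beta : 'I_K -> 'I_L -> R)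
  (Rhat : 'I_K -> R).

Definition F0 (W : 'I_K -> 'M[C]_N) (V : 'I_J -> 'M[C]_N) : Prop :=
  [/\ (forall j, Qmin / eta <= \sum_i rtr (outer (g j)) (W i)
                             + \sum_i rtr (outer (g j)) (V i)),
      (forall l, \sum_k beta k l * rtr (W k) (Amat l) * Rhat k <= Cl l),
      (forall k, psd (W k)) & (forall j, psd (V j))].

Definition load (W : 'I_K -> 'M[C]_N) (V : 'I_J -> 'M[C]_N) (l : 'I_L) : R :=
  \sum_k rtr (W k) (Amat l) + \sum_j rtr (V j) (Amat l).

Definition interf (W : 'I_K -> 'M[C]_N) (V : 'I_J -> 'M[C]_N) (k : 'I_K) : R :=
  \sum_(i | i != k) rtr (outer (h k)) (W i) + \sum_i rtr (outer (h k)) (V i).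

Definition sinr W V (k : 'I_K) : R :=
  rtr (outer (h k)) (W k) / (interf W V k + sigma2).

Definition obj4 W V : \bar R := \big[Order.min/+oo%E]_k (sinr W V k)%:E.

Definition gamma_max : \bar R :=
  ereal_sup [set x | exists W V,
    (F0 W V /\ forall l, load W V l <= El l) /\ x = obj4 W V].

Definition obj5 W V : \bar R := \big[Order.max/-oo%E]_l (load W V l / El l)%:E.

Definition hfun (gamma : R) : \bar R :=
  ereal_inf [set x | exists W V,
    (F0 W V /\ forall k,
       gamma^-1 * rtr (outer (h k)) (W k) - interf W V k - sigma2 >= 0)
    /\ x = obj5 W V].

End Defs.

(* Both conditions say that some tuple in F_0 has every load at most E_l and
   every SINR at least gamma; the point is that the supremum gamma_max and the
   infimum h(gamma) are attained.  A positive semidefinite Y satisfies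
   |Re Y_ij|, |Im Y_ij| <= (Y_ii + Y_jj) / 2, and each diagonal entry is bounded
   by the load of the transmitter owning that antenna, so nearly optimal tuples
   (SINR >= gamma - 1/(n+1), resp. loads <= (1 + 1/(n+1)) E_l) lie in a bounded
   set.  By Bolzano-Weierstrass, applied entrywise, a subsequence converges; all
   constraints are continuous and the positive semidefinite cone is closed, so
   the limit meets the constraints with gamma itself. *)

From mathcomp Require Import all_boot all_order all_algebra.
From mathcomp Require Import complex.
From mathcomp Require Import boolp classical_sets reals constructive_ereal ereal.
From mathcomp Require Import topology normedtype sequences.
From mathcomp Require Import lra.
Set Implicit Arguments. Unset Strict Implicit. Unset Printing Implicit Defensive.
Import Order.TTheory GRing.Theory Num.Theory.
Local Open Scope ring_scope.
Import numFieldNormedType.Exports.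
Local Open Scope classical_set_scope.

Local Notation Re := complex.Re.
Local Notation Im := complex.Im.

Section RealSequences.
Variable R : realType.

Lemma ler_cvg_seq (u v : R^nat) (a b : R) :
  u @ \oo --> a -> v @ \oo --> b -> (forall n, u n <= v n) -> a <= b.
Proof. by move=> ua vb uv; apply: (ler_cvg_to ua vb); apply: nearW. Qed.

Lemma cvg_sum_seq (I : finType) (P : pred I) (u : I -> R^nat) (a : I -> R) :
  (forall i, u i @ \oo --> a i) ->
  (fun n => \sum_(i | P i) u i n) @ \oo --> \sum_(i | P i) a i.
Proof. by move=> ua; apply: cvg_big => //; exact: add_continuous. Qed.

Lemma increasing_seq_geq (p : nat -> nat) : increasing_seq p -> forall n, (n <= p n)%N.
Proof.
move/increasing_seqP => incr; elim=> // n IHn.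
exact: leq_ltn_trans IHn (incr n).
Qed.

Lemma cvg_subseq (p : nat -> nat) (u : R^nat) (a : R) :
  increasing_seq p -> u @ \oo --> a -> u \o p @ \oo --> a.
Proof.
move=> incr ua; apply: cvg_comp ua => A [N _ NA]; exists N => // n /= Nn.
exact/NA/(leq_trans Nn)/increasing_seq_geq.
Qed.

Lemma bolzano_weierstrass_fin (I : finType) (u : nat -> I -> R) (B : R) :
  (forall n i, `|u n i| <= B) ->
  exists p, exists2 c : I -> R,
    increasing_seq p & forall i, (fun n => u (p n) i) @ \oo --> c i.
Proof.
move=> uB.
suff [p [c incr pc]] : exists p, exists2 c : I -> R, increasing_seq p &
    forall i, i \in enum I -> (fun n => u (p n) i) @ \oo --> c i.
  by exists p, c => // i; apply: pc; rewrite mem_enum.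
elim: (enum I) => [|i s [p [c incr pc]]]; first by exists id, (fun=> 0).
have /bolzano_weierstrass[q incrq /cvg_ex[ci qci]] : bounded_fun (fun n => u (p n) i).
  exists B; split; first exact: num_real.
  by move=> b Bb x _; apply: le_trans (uB _ _) (ltW Bb).
exists (p \o q), (fun j => if j == i then ci else c j).
  by move=> m n /=; rewrite incr; exact: incrq.
move=> j; rewrite inE; case: eqP => [-> _|_ /= js]; first exact: qci.
exact: cvg_subseq incrq (pc j js).
Qed.

End RealSequences.

Section ComplexSequences.
Variable R : realType.
Local Notation C := R[i].

Definition ccvg (u : nat -> C) (z : C) :=
  (fun n => Re (u n)) @ \oo --> Re z /\ (fun n => Im (u n)) @ \oo --> Im z.

Lemma ccvg_cst (z : C) : ccvg (fun=> z) z.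
Proof. by split; exact: cvg_cst. Qed.

Lemma ccvg_sum (I : finType) (P : pred I) (u : I -> nat -> C) (a : I -> C) :
  (forall i, ccvg (u i) (a i)) ->
  ccvg (fun n => \sum_(i | P i) u i n) (\sum_(i | P i) a i).
Proof.
move=> ua; split; rewrite raddf_sum; under eq_cvg do rewrite raddf_sum.
  by apply: cvg_sum_seq => i; case: (ua i).
by apply: cvg_sum_seq => i; case: (ua i).
Qed.

Lemma ccvgM (u v : nat -> C) (a b : C) :
  ccvg u a -> ccvg v b -> ccvg (fun n => u n * v n) (a * b).
Proof.
have ReM (x y : C) : Re (x * y) = Re x * Re y - Im x * Im y.
  by case: x y => [? ?] [? ?].
have ImM (x y : C) : Im (x * y) = Re x * Im y + Im x * Re y.
  by case: x y => [? ?] [? ?] /=; rewrite addrC.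
move=> [ua ua'] [vb vb']; split.
  by rewrite ReM; under eq_cvg do rewrite ReM; apply: cvgB; apply: cvgM.
by rewrite ImM; under eq_cvg do rewrite ImM; apply: cvgD; apply: cvgM.
Qed.

Lemma ccvgJ (u : nat -> C) (a : C) : ccvg u a -> ccvg (fun n => (u n)^*%C) a^*%C.
Proof.
have ReJ (x : C) : Re x^*%C = Re x by case: x.
have ImJ (x : C) : Im x^*%C = - Im x by case: x.
move=> [ua ua']; split; first by rewrite ReJ; under eq_cvg do rewrite ReJ.
by rewrite ImJ; under eq_cvg do rewrite ImJ; apply: cvgN.
Qed.

Lemma ccvg_unique (u : nat -> C) (a b : C) : ccvg u a -> ccvg u b -> a = b.
Proof.
case: a b => [a a'] [b b'] [ua ua'] [ub ub'].
have /= -> := cvg_unique (@Rhausdorff R) ua ub.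
by have /= -> := cvg_unique (@Rhausdorff R) ua' ub'.
Qed.

Lemma ccvg_ge0 (u : nat -> C) (a : C) : ccvg u a -> (forall n, 0 <= u n) -> 0 <= a.
Proof.
move=> [ua ua'] u_ge0; rewrite lecE; apply/andP; split.
  have Im0 : (fun n => Im (u n)) = fun=> 0 by apply/funext => n; exact: ger0_Im.
  move: ua'; rewrite Im0 => /(cvg_unique (@Rhausdorff R) (cvg_cst 0)) Ima.
  by rewrite -Ima.
apply: ler_cvg_seq (cvg_cst 0) ua _ => n.
by have := u_ge0 n; rewrite lecE => /andP[].
Qed.

End ComplexSequences.

Section MatrixSequences.
Variable R : realType.
Local Notation C := R[i].

Definition mxcvg m n (Xn : nat -> 'M[C]_(m, n)) (X : 'M[C]_(m, n)) :=
  forall i j, ccvg (fun k => Xn k i j) (X i j).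

Lemma mxcvg_cst m n (X : 'M[C]_(m, n)) : mxcvg (fun=> X) X.
Proof. by move=> i j; exact: ccvg_cst. Qed.

Lemma mxcvg_mul m n p (Xn : nat -> 'M[C]_(m, n)) (Yn : nat -> 'M[C]_(n, p)) X Y :
  mxcvg Xn X -> mxcvg Yn Y -> mxcvg (fun k => Xn k *m Yn k) (X *m Y).
Proof.
move=> XnX YnY i j; rewrite mxE.
have -> : (fun k => (Xn k *m Yn k) i j) = fun k => \sum_l Xn k i l * Yn k l j.
  by apply/funext => k; rewrite mxE.
by apply: ccvg_sum => l; apply: ccvgM.
Qed.

Lemma mxcvg_adj m n (Xn : nat -> 'M[C]_(m, n)) X :
  mxcvg Xn X -> mxcvg (fun k => adjmx (Xn k)) (adjmx X).
Proof.
move=> XnX i j; rewrite !mxE.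
have -> : (fun k => adjmx (Xn k) i j) = fun k => (Xn k j i)^*%C.
  by apply/funext => k; rewrite !mxE.
exact: ccvgJ.
Qed.

Lemma cvg_rtr n (Xn Yn : nat -> 'M[C]_n) X Y : mxcvg Xn X -> mxcvg Yn Y ->
  (fun k => rtr (Xn k) (Yn k)) @ \oo --> rtr X Y.
Proof.
move=> XnX YnY; have XYn := mxcvg_mul XnX YnY.
by have [] := ccvg_sum xpredT (fun i => XYn i i).
Qed.

Lemma psd_closed n (Xn : nat -> 'M[C]_n) X :
  mxcvg Xn X -> (forall k, psd (Xn k)) -> psd X.
Proof.
move=> XnX psdXn; split.
  have := mxcvg_adj XnX.
  rewrite (_ : (fun k => _) = Xn); last by apply/funext => k; case: (psdXn k).
  by move=> XnXadj; apply/matrixP => i j; exact: ccvg_unique (XnXadj i j) (XnX i j).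
move=> x; have quad := mxcvg_mul (mxcvg_mul (mxcvg_cst (adjmx x)) XnX) (mxcvg_cst x).
by apply: ccvg_ge0 (quad 0 0) _ => k; exact: (psdXn k).2.
Qed.

Lemma bolzano_weierstrass_mx (I : finType) m n (Xn : nat -> I -> 'M[C]_(m, n)) B :
  (forall k s i j, `|Re (Xn k s i j)| <= B /\ `|Im (Xn k s i j)| <= B) ->
  exists p, exists2 X : I -> 'M[C]_(m, n),
    increasing_seq p & forall s, mxcvg (fun k => Xn (p k) s) (X s).
Proof.
move=> XnB.
pose u k (x : I * 'I_m * 'I_n * bool) :=
  let: (s, i, j, b) := x in if b then Re (Xn k s i j) else Im (Xn k s i j).
have [|p [c incr pc]] := @bolzano_weierstrass_fin _ _ u B.
  by move=> k [[[s i] j] []]; case: (XnB k s i j).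
exists p, (fun s => \matrix_(i, j) Complex (c (s, i, j, true)) (c (s, i, j, false))) => //.
by move=> s i j; rewrite mxE; split; [exact: (pc (s, i, j, true)) | exact: (pc (s, i, j, false))].
Qed.

End MatrixSequences.

Section PositiveSemidefinite.
Variables (R : realType) (n : nat).
Local Notation C := R[i].

Lemma rtr_mul_adj_ge0 (x : 'cV[C]_n) (W : 'M[C]_n) : psd W -> 0 <= rtr (x *m adjmx x) W.
Proof.
move=> psdW; rewrite /rtr -mulmxA mxtrace_mulC trace_mx11.
by have := psdW.2 x; rewrite lecE => /andP[].
Qed.

Lemma psd_quad_pair (Y : 'M[C]_n) i j (v : C) : psd Y ->
  0 <= Re (Y i i + v * Y i j + v^*%C * Y j i + v^*%C * v * Y j j).
Proof.
move=> psdY; pose x : 'cV[C]_n := delta_mx i 0 + v *: delta_mx j 0.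
have adjx : adjmx x = delta_mx 0 i + v^*%C *: delta_mx 0 j.
  apply/matrixP => a b; rewrite !mxE rmorphD rmorphM !rmorph_nat.
  by rewrite [(b == i) && _]andbC [(b == j) && _]andbC.
have entry (a b : 'I_n) :
    (delta_mx 0 a : 'rV[C]_n) *m Y *m (delta_mx b 0 : 'cV[C]_n) = (Y a b)%:M.
  by apply/matrixP => ? ?; rewrite !ord1 -rowE -colE !mxE.
have := psdY.2 x; rewrite adjx /x !mulmxDl !mulmxDr -!scalemxAl -!scalemxAr !entry.
by rewrite !mxE /= !mulr1n !addrA !mulrA lecE => /andP[].
Qed.

Lemma psd_diag_ge0 (Y : 'M[C]_n) i : psd Y -> 0 <= Re (Y i i).
Proof. by move/(psd_quad_pair i i 0); rewrite !(mul0r, rmorph0, addr0). Qed.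

Lemma psd_entry_bound (Y : 'M[C]_n) (D : R) : psd Y -> (forall i, Re (Y i i) <= D) ->
  forall i j, `|Re (Y i j)| <= D /\ `|Im (Y i j)| <= D.
Proof.
move=> psdY YD i j.
have Yji : Y j i = (Y i j)^*%C by rewrite -[in LHS](psdY.1 : adjmx Y = Y) !mxE.
have Q v := psd_quad_pair i j v psdY; rewrite Yji in Q.
(* the test vectors e_i + v e_j with v = 1, -1, 'i, -'i *)
move: (Q (1 +i* 0)%C) (Q ((-1) +i* 0)%C) (Q (0 +i* 1)%C) (Q (0 +i* (-1))%C) (YD i) (YD j).
case: (Y i i) (Y j j) (Y i j) => [a a'] [b b'] [c c'] /=.
rewrite !ler_norml; lra.
Qed.

End PositiveSemidefinite.

Section Blocks.
Variables (R : realType) (L M : nat).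
Local Notation C := R[i].
Local Notation N := (M * L)%N.

Lemma rtr_Amat (W : 'M[C]_N) (l : 'I_L) :
  rtr W (Amat R M l) = \sum_(i < N | (l * M <= i < l.+1 * M)%N) Re (W i i).
Proof.
rewrite /rtr /mxtrace raddf_sum [RHS]big_mkcond; apply: eq_bigr => i _.
rewrite mxE (bigD1 i) //= big1 ?addr0 => [|j ji]; last by rewrite mxE (negbTE ji) mulr0.
by rewrite mxE eqxx /=; case: ifP => _; rewrite ?mulr1 ?mulr0.
Qed.

Lemma rtr_Amat_ge0 (W : 'M[C]_N) l : psd W -> 0 <= rtr W (Amat R M l).
Proof. by move=> psdW; rewrite rtr_Amat; apply: sumr_ge0 => i _; exact: psd_diag_ge0. Qed.

Lemma psd_diag_le_rtr_Amat (W : 'M[C]_N) (i : 'I_N) : (0 < M)%N -> psd W ->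
  exists l : 'I_L, Re (W i i) <= rtr W (Amat R M l).
Proof.
move=> M_gt0 psdW; have iL : (i %/ M < L)%N by rewrite ltn_divLR // -(mulnC M) ltn_ord.
exists (Ordinal iL); rewrite rtr_Amat (bigD1 i) /=; last by rewrite leq_divM ltn_ceil.
by rewrite lerDl; apply: sumr_ge0 => j _; exact: psd_diag_ge0.
Qed.

End Blocks.

Section Problem.
Variables (R : realType) (L M K J : nat).
Local Notation C := R[i].
Local Notation N := (M * L)%N.
Variables (h : 'I_K -> 'cV[C]_N) (g : 'I_J -> 'cV[C]_N) (sigma2 eta Qmin : R)
  (Cl El : 'I_L -> R) (beta : 'I_K -> 'I_L -> R) (Rhat : 'I_K -> R).
Hypotheses (M_gt0 : (0 < M)%N) (sigma2_gt0 : 0 < sigma2) (El_gt0 : forall l, 0 < El l).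

Implicit Types (W : 'I_K -> 'M[C]_N) (V : 'I_J -> 'M[C]_N).

Local Notation F0 := (F0 g eta Qmin Cl beta Rhat).

Definition feasible (a b : R) W V :=
  [/\ F0 W V, forall l, load W V l <= a * El l &
      forall k, b * (interf h W V k + sigma2) <= rtr (outer (h k)) (W k)].

Definition covariances W V (s : 'I_K + 'I_J) :=
  match s with inl k => W k | inr j => V j end.

Lemma load_covariances W V l :
  load W V l = \sum_s rtr (covariances W V s) (Amat R M l).
Proof. by rewrite big_sumType. Qed.

Lemma F0_psd W V : F0 W V -> forall s, psd (covariances W V s).
Proof. by move=> [_ _ psdW psdV] [k|j]; [exact: psdW | exact: psdV]. Qed.

Lemma load_ge0 W V l : F0 W V -> 0 <= load W V l.
Proof.
move/F0_psd => psdWV; rewrite load_covariances.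
by apply: sumr_ge0 => s _; exact: rtr_Amat_ge0.
Qed.

Lemma diag_le_sum_load W V s i : F0 W V ->
  Re (covariances W V s i i) <= \sum_l load W V l.
Proof.
move=> F0WV; have [l0 le_l0] := psd_diag_le_rtr_Amat i M_gt0 (F0_psd F0WV s).
apply: le_trans le_l0 _; rewrite (bigD1 l0) //= load_covariances (bigD1 s) //= -addrA.
rewrite lerDl addr_ge0 ?sumr_ge0 // => [s' _|l _]; last exact: load_ge0.
exact/rtr_Amat_ge0/F0_psd.
Qed.

Lemma interf_ge0 W V k : F0 W V -> 0 <= interf h W V k.
Proof.
move/F0_psd => psdWV; apply: addr_ge0.
  by apply: sumr_ge0 => i _; exact: rtr_mul_adj_ge0 (psdWV (inl i)).
by apply: sumr_ge0 => j _; exact: rtr_mul_adj_ge0 (psdWV (inr j)).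
Qed.

Section Limits.
Variables (Wn : nat -> 'I_K -> 'M[C]_N) (Vn : nat -> 'I_J -> 'M[C]_N)
  (W : 'I_K -> 'M[C]_N) (V : 'I_J -> 'M[C]_N).
Hypothesis cvgWV :
  forall s, mxcvg (fun n => covariances (Wn n) (Vn n) s) (covariances W V s).

Lemma cvg_load l : (fun n => load (Wn n) (Vn n) l) @ \oo --> load W V l.
Proof.
rewrite load_covariances; under eq_cvg do rewrite load_covariances.
by apply: cvg_sum_seq => s; exact: cvg_rtr (cvgWV s) (mxcvg_cst _).
Qed.

Lemma cvg_interf k : (fun n => interf h (Wn n) (Vn n) k) @ \oo --> interf h W V k.
Proof.
apply: cvgD; apply: cvg_sum_seq => s.
  exact: cvg_rtr (mxcvg_cst _) (cvgWV (inl s)).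
exact: cvg_rtr (mxcvg_cst _) (cvgWV (inr s)).
Qed.

Lemma F0_closed : (forall n, F0 (Wn n) (Vn n)) -> F0 W V.
Proof.
move=> F0n; split=> [j|l|k|j].
- apply: ler_cvg_seq (cvg_cst _) _ _; last by move=> n; case: (F0n n) => + _ _ _; apply.
  apply: cvgD; apply: cvg_sum_seq => s.
    exact: cvg_rtr (mxcvg_cst _) (cvgWV (inl s)).
  exact: cvg_rtr (mxcvg_cst _) (cvgWV (inr s)).
- apply: ler_cvg_seq _ (cvg_cst _) _; last by move=> n; case: (F0n n) => _ + _ _; apply.
  apply: cvg_sum_seq => k; apply: cvgM; last exact: cvg_cst.
  by apply: cvgM; [exact: cvg_cst | exact: cvg_rtr (cvgWV (inl k)) (mxcvg_cst _)].
- exact: psd_closed (cvgWV (inl k)) (fun n => F0_psd (F0n n) (inl k)).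
- exact: psd_closed (cvgWV (inr j)) (fun n => F0_psd (F0n n) (inr j)).
Qed.

Lemma feasible_closed (an bn : R^nat) (a b : R) :
  an @ \oo --> a -> bn @ \oo --> b ->
  (forall n, feasible (an n) (bn n) (Wn n) (Vn n)) -> feasible a b W V.
Proof.
move=> ana bnb feas; split=> [|l|k].
- by apply: F0_closed => n; case: (feas n).
- apply: ler_cvg_seq; [exact: cvg_load | apply: cvgM ana (cvg_cst _) |].
  by move=> n; case: (feas n) => _ + _; apply.
- apply: ler_cvg_seq _ (cvg_rtr (mxcvg_cst _) (cvgWV (inl k))) _.
    by apply: cvgM bnb _; apply: cvgD; [exact: cvg_interf | exact: cvg_cst].
  by move=> n; case: (feas n) => _ _; apply.
Qed.

End Limits.


Lemma feasible_limit (an bn : R^nat) (a b c : R) :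
  an @ \oo --> a -> bn @ \oo --> b -> (forall n, an n <= c) ->
  (forall n, exists W V, feasible (an n) (bn n) W V) -> exists W V, feasible a b W V.
Proof.
move=> ana bnb an_le feas.
have /choice[WV feasWV] : forall n, exists WV : ('I_K -> 'M[C]_N) * ('I_J -> 'M[C]_N),
    feasible (an n) (bn n) WV.1 WV.2.
  by move=> n; have [W [V ?]] := feas n; exists (W, V).
have F0n n : F0 (WV n).1 (WV n).2 by case: (feasWV n).
have diag_le n s i :
    Re (covariances (WV n).1 (WV n).2 s i i) <= \sum_l c * El l.
  apply: le_trans (diag_le_sum_load s i (F0n n)) _; apply: ler_sum => l _.
  case: (feasWV n) => _ /(_ l) load_le _; apply: le_trans load_le _.
  by apply: ler_wpM2r; [exact: ltW | exact: an_le].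
have [p [X incr cvgX]] := bolzano_weierstrass_mx
  (fun n s => psd_entry_bound (F0_psd (F0n n) s) (diag_le n s)).
exists (X \o inl), (X \o inr).
apply: (feasible_closed _ (cvg_subseq incr ana) (cvg_subseq incr bnb)).
  by case=> [k|j]; exact: cvgX.
by move=> n; exact: feasWV.
Qed.

Lemma obj4_geP (x : R) W V :
  (x%:E <= obj4 h sigma2 W V)%E <-> forall k, x <= sinr h sigma2 W V k.
Proof.
split=> [/bigmin_geP[_ le_x] k|le_x]; first by rewrite -lee_fin; exact: le_x.
by apply/bigmin_geP; split=> [|k _]; [exact: leey | rewrite lee_fin].
Qed.

Lemma obj5_leP (x : R) W V :
  (obj5 El W V <= x%:E)%E <-> forall l, load W V l <= x * El l.
Proof.
split=> [/bigmax_leP[_ le_x] l|le_x].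
  by rewrite -ler_pdivrMr // -lee_fin; exact: le_x.
by apply/bigmax_leP; split=> [|l _]; [exact: leNye | rewrite lee_fin ler_pdivrMr].
Qed.

Lemma sinr_geE (x : R) W V k : F0 W V ->
  (x <= sinr h sigma2 W V k) = (x * (interf h W V k + sigma2) <= rtr (outer (h k)) (W k)).
Proof.
move=> F0WV; rewrite /sinr ler_pdivlMr //.
by apply: lt_le_trans sigma2_gt0 _; rewrite lerDr; exact: interf_ge0.
Qed.

Lemma gamma_max_geP (gamma : R) :
  (gamma%:E <= gamma_max h g sigma2 eta Qmin Cl El beta Rhat)%E <->
  exists W V, feasible 1 gamma W V.
Proof.
split=> [gamma_le|[W [V [F0WV loadWV sinrWV]]]].
  apply: (feasible_limit (an := fun=> 1) (bn := fun n => gamma - harmonic n) (c := 1)).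
  - exact: cvg_cst.
  - by rewrite -[X in _ --> X]subr0; apply: cvgB; [exact: cvg_cst | exact: cvg_harmonic].
  - by [].
  move=> n; have : ((gamma - harmonic n)%:E < gamma_max h g sigma2 eta Qmin Cl El beta Rhat)%E.
    by apply: lt_le_trans gamma_le; rewrite lte_fin ltrBlDr ltrDl harmonic_gt0.
  case/ereal_sup_gt => _ [W [V [[F0WV loadWV] ->]]] /ltW /obj4_geP sinrWV.
  exists W, V; split=> // [l|k]; first by rewrite mul1r.
  by rewrite -sinr_geE.
apply: le_trans (ereal_sup_ubound _) => [|/=]; last first.
  by exists W, V; split=> //; split=> // l; rewrite -[El l]mul1r.
by apply/obj4_geP => k; rewrite sinr_geE.
Qed.

Lemma hfun_le1P (gamma : R) : 0 < gamma ->
  (hfun h g sigma2 eta Qmin Cl El beta Rhat gamma <= 1%:E)%E <->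
  exists W V, feasible 1 gamma W V.
Proof.
move=> gamma_gt0.
have constraintE W V k : (0 <= gamma^-1 * rtr (outer (h k)) (W k) - interf h W V k - sigma2) =
    (gamma * (interf h W V k + sigma2) <= rtr (outer (h k)) (W k)).
  by rewrite -addrA -opprD subr_ge0 ler_pdivlMl.
split=> [hfun_le|[W [V [F0WV loadWV sinrWV]]]].
  apply: (feasible_limit (an := fun n => 1 + harmonic n) (bn := fun=> gamma) (c := 2)).
  - by rewrite -[X in _ --> X]addr0; apply: cvgD; [exact: cvg_cst | exact: cvg_harmonic].
  - exact: cvg_cst.
  - by move=> n; rewrite [2]/(1 + 1) lerD2l /= invf_le1 ?ler1n.
  move=> n; have : (hfun h g sigma2 eta Qmin Cl El beta Rhat gamma < (1 + harmonic n)%:E)%E.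
    by apply: le_lt_trans hfun_le _; rewrite lte_fin ltrDl harmonic_gt0.
  case/ereal_inf_lt => _ [W [V [[F0WV cWV] ->]]] /ltW /obj5_leP loadWV.
  by exists W, V; split=> // k; rewrite -constraintE.
apply: (@le_trans _ _ (obj5 El W V)); last exact/obj5_leP.
by apply: ereal_inf_lbound; exists W, V; split=> //; split=> // k; rewrite constraintE.
Qed.

End Problem.

Theorem lemma2 (R : realType) (L M K J : nat)
  (h : 'I_K -> 'cV[R[i]]_(M * L)) (g : 'I_J -> 'cV[R[i]]_(M * L))
  (sigma2 eta Qmin : R) (Cl El : 'I_L -> R) (beta : 'I_K -> 'I_L -> R)
  (Rhat : 'I_K -> R) (gamma : R) :
  (0 < L)%N -> (0 < M)%N -> (0 < K)%N ->
  0 < sigma2 -> 0 < eta < 1 -> 0 <= Qmin ->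
  (forall l, 0 < Cl l) -> (forall l, 0 < El l) ->
  (forall k l, 0 < beta k l) -> (forall k, 0 <= Rhat k) ->
  0 < gamma ->
  ((gamma%:E <= gamma_max h g sigma2 eta Qmin Cl El beta Rhat)%E <->
   (hfun h g sigma2 eta Qmin Cl El beta Rhat gamma <= 1%:E)%E).
Proof.
move=> _ M_gt0 _ sigma2_gt0 _ _ _ El_gt0 _ _ gamma_gt0.
apply: iff_trans (gamma_max_geP h g eta Qmin Cl beta Rhat M_gt0 sigma2_gt0 El_gt0 gamma) _.
exact: iff_sym (hfun_le1P h g sigma2 eta Qmin Cl beta Rhat M_gt0 El_gt0 gamma_gt0).
Qed.
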